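(* Let $G$ be a locally compact group with left Haar measure $m$. Then either $I(G)=1$ or $I(G)=\infty$.
   Context: $I(G)=\sup_{K\in \mathcal K}\inf_{A\in \mathcal K_p} m(KA)/m(A)$, where $\mathcal K$ is the collection of nonempty compact subsets of $G$, $\mathcal K_p$ the collection of compact subsets of positive left Haar measure, and $KA=\{ka:k\in K,a\in A\}$. *)

From HB Require Import structures.
From mathcomp Require Import all_boot all_order all_algebra.
From mathcomp Require Import all_classical all_reals all_analysis.
Set Implicit Arguments. Unset Strict Implicit. Unset Printing Implicit Defensive.
Import Order.TTheory GRing.Theory Num.Theory.
Local Open Scope classical_set_scope.
Local Open Scope ring_scope.

(* The Borel sigma-algebra of a topological space, as a measurable type
   whose carrier is (convertibly) the carrier of the space. *)
Definition borelT (G : ptopologicalType) := g_sigma_algebraType (@open G).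

Definition lc_group (G : ptopologicalType) (mul : G -> G -> G) (inv : G -> G)
    (one : G) : Prop :=
  [/\ (forall x y z, mul x (mul y z) = mul (mul x y) z),
      (forall x, mul one x = x /\ mul x one = x),
      (forall x, mul (inv x) x = one /\ mul x (inv x) = one),
      (continuous (fun p : G * G => mul p.1 p.2) /\ continuous inv) &
      (hausdorff_space G /\ locally_compact [set: G])].

Definition setmul (G : Type) (mul : G -> G -> G) (K A : set G) : set G :=
  [set mul k a | k in K & a in A].

Definition left_haar (R : realType) (G : ptopologicalType) (mul : G -> G -> G)
    (m : {measure set (borelT G) -> \bar R}) : Prop :=
  [/\ (forall (g : G) (A : set G), measurable (A : set (borelT G)) ->
          m (mul g @` A) = m A),
      (forall K : set G, compact K -> (m K < +oo)%E),
      (forall A : set G, measurable (A : set (borelT G)) ->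
          m A = ereal_inf [set m U | U in [set U : set G | open U /\ A `<=` U]]),
      (forall U : set G, open U ->
          m U = ereal_sup [set m K | K in [set K : set G | compact K /\ K `<=` U]]) &
      m [set: G] != 0%E].

Definition Iconst (R : realType) (G : ptopologicalType) (mul : G -> G -> G)
    (m : {measure set (borelT G) -> \bar R}) : \bar R :=
  ereal_sup [set ereal_inf
                 [set (m (setmul mul K A) * ((fine (m A))^-1)%:E)%E
                   | A in [set A : set G | compact A /\ (0 < m A)%E]]
            | K in [set K : set G | compact K /\ K !=set0]].

(* Write F(K) := inf_A m(KA)/m(A), so that I(G) = sup_K F(K). Left invariance
   gives m(KA) >= m(kA) = m(A) for k in K, hence F(K) >= 1 and I(G) >= 1.
   Factoring m(KKA)/m(A) = m(K(KA))/m(KA) * m(KA)/m(A), with KA again compact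
   of positive measure, gives F(K)^2 <= F(KK) <= I(G). Taking the supremum over
   K yields I(G)^2 <= I(G), which for a finite I(G) >= 1 forces I(G) = 1. *)
From HB Require Import structures.
From mathcomp Require Import all_boot all_order all_algebra.
From mathcomp Require Import all_classical all_reals all_analysis.
From mathcomp Require Import lra.
Set Implicit Arguments. Unset Strict Implicit.
Import Order.TTheory GRing.Theory Num.Theory.
Local Open Scope classical_set_scope.
Local Open Scope ring_scope.

Lemma ereal_sup_sqr_le_dichotomy (R : realType) (S : set \bar R) :
  (1 <= ereal_sup S)%E -> (forall y, S y -> (y * y <= ereal_sup S)%E) ->
  ereal_sup S = 1%:E \/ ereal_sup S = +oo%E.
Proof.
move=> sup_ge1 sqr_le; case Esup: (ereal_sup S) sup_ge1 sqr_le => [r| |] //;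
  last by right.
rewrite lee_fin => r_ge1 sqr_le; left; congr EFin.
apply/eqP; rewrite eq_le r_ge1 andbT leNgt; apply/negP => r_gt1.
have : (((r + 1) / 2)%:E < ereal_sup S)%E by rewrite Esup lte_fin; lra.
case/ereal_sup_gt => -[y| |] /sqr_le //; rewrite -EFinM !lte_fin lee_fin.
(* ((r + 1) / 2)^2 - r = ((r - 1) / 2)^2 > 0 *)
by move=> yy_le y_gt; clear Esup sqr_le; nra.
Qed.

Lemma borel_measurable_compact (G : ptopologicalType) (A : set G) :
  hausdorff_space G -> compact A -> measurable (A : set (borelT G)).
Proof.
move=> hausG cA; rewrite -[A]setCK; apply: measurableC.
by apply: sub_gen_smallest; rewrite /= openC; exact: compact_closed.
Qed.

Section SetMul.
Variables (G : Type) (mul : G -> G -> G).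

Lemma setmulA : associative mul ->
  forall K1 K2 A, setmul mul (setmul mul K1 K2) A = setmul mul K1 (setmul mul K2 A).
Proof.
move=> mulA K1 K2 A; apply/seteqP; split => x.
- case=> _ [k1 K1k1 [k2 K2k2 <-]] [a Aa <-].
  by exists k1 => //; exists (mul k2 a); [exists k2 => //; exists a | rewrite mulA].
- case=> k1 K1k1 [_ [k2 K2k2 [a Aa <-]] <-].
  by exists (mul k1 k2); [exists k1 => //; exists k2 | exists a => //; rewrite mulA].
Qed.

Lemma setmul_set1l k A : setmul mul [set k] A = mul k @` A.
Proof.
apply/seteqP; split => x; first by case=> _ -> [a Aa <-]; exists a.
by case=> a Aa <-; exists k => //; exists a.
Qed.

End SetMul.

Lemma compact_setmul (G : topologicalType) (mul : G -> G -> G) (K A : set G) :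
  continuous (fun p : G * G => mul p.1 p.2) -> compact K -> compact A ->
  compact (setmul mul K A).
Proof.
move=> mul_cont cK cA.
have -> : setmul mul K A = (fun p : G * G => mul p.1 p.2) @` (K `*` A).
  apply/seteqP; split => x.
  - by case=> k Kk [a Aa <-]; exists (k, a).
  - by case=> -[k a] [/= Kk Aa] <-; exists k => //; exists a.
by apply: continuous_compact; [exact: continuous_subspaceT | exact: compact_setX].
Qed.

Section Expansion.
Variables (R : realType) (G : ptopologicalType) (mul : G -> G -> G)
  (m : {measure set (borelT G) -> \bar R}).
Hypotheses (mulA : associative mul) (hausG : hausdorff_space G)
  (mul_cont : continuous (fun p : G * G => mul p.1 p.2))
  (m_invariant : forall g A, measurable (A : set (borelT G)) ->
     m (mul g @` A) = m A)
  (m_compact_fin : forall K, compact K -> (m K < +oo)%E).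

Definition expansion (K : set G) : \bar R :=
  ereal_inf [set (m (setmul mul K A) * ((fine (m A))^-1)%:E)%E
            | A in [set A : set G | compact A /\ (0 < m A)%E]].

Lemma fin_num_measure_compact K : compact K -> m K \is a fin_num.
Proof. by move=> cK; rewrite ge0_fin_numE ?measure_ge0 ?m_compact_fin. Qed.

Lemma fine_measure_compact_gt0 A : compact A -> (0 < m A)%E -> 0 < fine (m A).
Proof. by move=> cA mA_gt0; rewrite fine_gt0 // mA_gt0 ltey_eq fin_num_measure_compact. Qed.

Lemma measure_setmul_ge K A : compact K -> K !=set0 -> compact A ->
  (m A <= m (setmul mul K A))%E.
Proof.
move=> cK [k Kk] cA.
rewrite -(m_invariant k (borel_measurable_compact hausG cA)).
apply: le_measure; rewrite ?inE.
- apply: borel_measurable_compact hausG _; rewrite -setmul_set1l.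
  exact: compact_setmul mul_cont (@compact_set1 _ k) cA.
- exact: borel_measurable_compact hausG (compact_setmul mul_cont cK cA).
- by rewrite -setmul_set1l => _ [_ -> [a Aa <-]]; exists k => //; exists a.
Qed.

Lemma expansion_ge1 K : compact K -> K !=set0 -> (1 <= expansion K)%E.
Proof.
move=> cK K0; apply: le_ereal_inf_tmp => _ [A [cA mA_gt0] <-].
have /fineK mAE := fin_num_measure_compact cA.
have /lt0r_neq0 mA_neq0 := fine_measure_compact_gt0 cA mA_gt0.
apply: le_trans (lee_wpmul2r _ (measure_setmul_ge cK K0 cA)).
  by rewrite -mAE -EFinM mulfV.
by rewrite lee_fin invr_ge0 fine_ge0 ?measure_ge0.
Qed.

Lemma expansion_sqr_le K : compact K -> K !=set0 ->
  (expansion K * expansion K <= expansion (setmul mul K K))%E.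
Proof.
move=> cK K0; have expansion_ge0 := le_trans lee01 (expansion_ge1 cK K0).
apply: le_ereal_inf_tmp => _ [A [cA mA_gt0] <-].
set B := setmul mul K A; rewrite setmulA // -/B.
have cB : compact B by exact: compact_setmul.
have mB_gt0 : (0 < m B)%E by apply: lt_le_trans (measure_setmul_ge cK K0 cA).
have cKB : compact (setmul mul K B) by exact: compact_setmul.
have /fineK mAE := fin_num_measure_compact cA.
have /fineK mBE := fin_num_measure_compact cB.
have /fineK mKBE := fin_num_measure_compact cKB.
have /lt0r_neq0 mB_neq0 := fine_measure_compact_gt0 cB mB_gt0.
have -> : (m (setmul mul K B) * ((fine (m A))^-1)%:E =
    (m (setmul mul K B) * ((fine (m B))^-1)%:E) * (m B * ((fine (m A))^-1)%:E))%E.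
  by rewrite -mAE -mBE -mKBE /= -!EFinM mulrA divfK.
by apply: lee_pmul => //; apply: ereal_inf_lbound; [exists B | exists A].
Qed.

End Expansion.

Theorem lemma3p1 (R : realType) (G : ptopologicalType)
    (mul : G -> G -> G) (inv : G -> G) (one : G)
    (m : {measure set (borelT G) -> \bar R}) :
  lc_group mul inv one -> left_haar mul m ->
  Iconst mul m = 1%:E \/ Iconst mul m = +oo%E.
Proof.
case=> mulA _ _ [mul_cont _] [hausG _] [m_invariant m_compact_fin _ _ _].
have F_ge1 := expansion_ge1 hausG mul_cont m_invariant m_compact_fin.
have F_sqr := expansion_sqr_le mulA hausG mul_cont m_invariant m_compact_fin.
have -> : Iconst mul m =
    ereal_sup [set expansion mul m K | K in [set K | compact K /\ K !=set0]] by [].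
apply: ereal_sup_sqr_le_dichotomy.
  have [c1 one_n0] : compact [set one] /\ [set one] !=set0.
    by split; [exact: compact_set1 | exists one].
  by apply: le_trans (F_ge1 _ c1 one_n0) (ereal_sup_ubound _); exists [set one].
move=> _ [K [cK [k Kk]] <-].
have K_n0 : K !=set0 by exists k.
have KK_n0 : setmul mul K K !=set0 by exists (mul k k); exists k => //; exists k.
apply: le_trans (F_sqr _ cK K_n0) (ereal_sup_ubound _).
by exists (setmul mul K K); first split; first exact: compact_setmul.
Qed.
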